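(* Let $M$ be a completely regular Hausdorff space. Then the Stone–Čech compactification $\beta M$ of $M$ is homeomorphic to the Gelfand spectrum of the abelian $C^\ast$-algebra $C^{pt}(\mathcal{Q}(\mathcal{T}(M)))$. If, in particular, $M$ is discrete, then $\beta M$ is homeomorphic to $\mathcal{Q}(\mathcal{T}(M))$.
   Context: $\mathcal{T}(M)$ is the lattice of open subsets of $M$. A quasipoint of $\mathcal{T}(M)$ is a maximal dual ideal (maximal nonempty family of open sets not containing $\emptyset$, upward closed and closed under finite intersections); $\mathcal{Q}(\mathcal{T}(M))$ is the set of quasipoints with topology having base $\{\mathfrak{B}\mid U\in\mathfrak{B}\}$, $U\in\mathcal{T}(M)$. $\mathfrak{B}$ is over $x\in M$ if $x\in\bigcap_{U\in\mathfrak{B}}\overline{U}$ (at most one such $x$ since $M$ is Hausdorff); $\mathcal{Q}^{pt}(\mathcal{T}(M))$ is the set of quasipoints over some point, and $pt:\mathcal{Q}^{pt}(\mathcal{T}(M))\to M$ sends a quasipoint over $x$ to $x$. $C^{pt}(\mathcal{Q}(\mathcal{T}(M)))$ is the $C^\ast$-algebra of continuous functions $\mathcal{Q}(\mathcal{T}(M))\to\mathbb{C}$ that are constant on each fibre of $pt$. *)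

From HB Require Import structures.
From mathcomp Require Import all_boot all_order all_algebra.
From mathcomp Require Import all_classical all_reals all_analysis.
From mathcomp Require Import complex.

Set Implicit Arguments.
Unset Strict Implicit.
Unset Printing Implicit Defensive.

Import Order.TTheory GRing.Theory Num.Theory.
Import numFieldNormedType.Exports.

Local Open Scope classical_set_scope.
Local Open Scope ring_scope.

Definition homeomorphic (X Y : topologicalType) : Prop :=
  exists (f : X -> Y) (g : Y -> X),
    [/\ continuous f, continuous g, cancel f g & cancel g f].

Definition discrete_top (X : topologicalType) : Prop :=
  forall A : set X, open A.

Definition stone_cech (M K : topologicalType) (e : M -> K) : Prop :=
  [/\ compact [set: K], hausdorff_space K,
      continuous e /\ injective e /\
      (forall U : set M, open U -> exists V : set K, open V /\ e @^-1` V = U),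
      dense (range e)
    & forall (L : topologicalType) (f : M -> L),
        compact [set: L] -> hausdorff_space L -> continuous f ->
        exists g : K -> L, continuous g /\ g \o e = f].

Section Quasipoints.
Variable M : topologicalType.

(** Dual ideals (filters) of the lattice T(M) of open subsets of M,
    not containing the bottom element (empty set). *)
Definition open_dual_ideal (F : set (set M)) : Prop :=
  [/\ (forall U, F U -> open U),
      F !=set0,
      ~ F set0,
      (forall U V, F U -> open V -> U `<=` V -> F V)
    & (forall U V, F U -> F V -> F (U `&` V))].

Definition quasipoint (F : set (set M)) : Prop :=
  open_dual_ideal F /\
  (forall G, open_dual_ideal G -> F `<=` G -> G = F).

Record QP := MkQP { qp_set :> set (set M); qp_ok : quasipoint qp_set }.

HB.instance Definition _ := gen_eqMixin QP.
HB.instance Definition _ := gen_choiceMixin QP.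

Definition qp_basic : set (set QP) :=
  [set S | exists U : set M, open U /\ S = [set B : QP | qp_set B U]].

HB.instance Definition _ :=
  isSubBaseTopological.Build QP qp_basic id.

Definition qp_over (B : QP) (x : M) : Prop :=
  forall U, qp_set B U -> closure U x.

End Quasipoints.

Section Spectrum.
Variables (R : realType) (M : topologicalType).
Local Notation C := (R[i])^o.
(** [(R[i])^o] is [R[i]] with its norm (Euclidean) topology. *)

(** Continuous functions Q(T(M)) -> C constant on each fibre of pt. *)
Record Cpt := MkCpt {
  cpt_fun :> QP M -> C;
  cpt_cont : continuous cpt_fun;
  cpt_fibre : forall (B1 B2 : QP M) (x : M),
      qp_over B1 x -> qp_over B2 x -> cpt_fun B1 = cpt_fun B2 }.

(** Characters of C^pt: nonzero multiplicative C-linear functionals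
    (operations of the algebra are pointwise). *)
Definition cpt_character (phi : Cpt -> C) : Prop :=
  [/\ (forall f g h : Cpt, (forall q, h q = f q + g q) -> phi h = phi f + phi g),
      (forall (c : C) (f h : Cpt), (forall q, h q = c * f q) -> phi h = c * phi f),
      (forall f g h : Cpt, (forall q, h q = f q * g q) -> phi h = phi f * phi g)
    & exists f : Cpt, phi f != 0].

Record Spec := MkSpec { spec_fun :> Cpt -> C; spec_ok : cpt_character spec_fun }.

HB.instance Definition _ := gen_eqMixin Spec.
HB.instance Definition _ := gen_choiceMixin Spec.

Definition spec_basic : set (set Spec) :=
  [set S | exists (f : Cpt) (W : set C), open W /\ S = [set phi : Spec | W (phi f)]].

HB.instance Definition _ :=
  isSubBaseTopological.Build Spec spec_basic id.

End Spectrum.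

(* Let e : M -> K be a Stone-Cech compactification. Along a quasipoint B the
   map e has a unique limit qp_lim B in K, and qp_lim is a continuous
   surjection from the compact space Q(T(M)) onto K, sending quasipoints over
   x to e x. A function of C^pt, being constant on the fibres of pt, descends
   to a bounded continuous function on M, which extends to K; so C^pt is the
   algebra C(K), through composition with qp_lim. A character of C(K)
   evaluates at a common zero of its kernel, which exists by compactness since
   the zero sets of the kernel are closed under finite intersections (use
   |f|^2 + |g|^2). Hence K maps bijectively and continuously onto the
   spectrum, a Hausdorff space. When M is discrete, two distinct quasipoints
   contain disjoint open sets, whose indicator functions extend to K and
   separate their limits, so qp_lim itself is a homeomorphism. *)

From HB Require Import structures.
From mathcomp Require Import all_boot all_order all_algebra.
From mathcomp Require Import all_classical all_reals all_analysis.
From mathcomp Require Import complex.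

Set Implicit Arguments.
Unset Strict Implicit.
Unset Printing Implicit Defensive.

Import Order.TTheory GRing.Theory Num.Theory.
Import numFieldNormedType.Exports.

Local Open Scope classical_set_scope.
Local Open Scope ring_scope.

(* The equation on [open] says that X carries the topology generated by the
   subbase D, as built by [isSubBaseTopological]; for such X it holds by
   [erefl]. *)
Lemma subbase_open (X : topologicalType) (D : set_system X) :
  @open X = [set \bigcup_(A in E) A | E in subset^~ (finI_from D id)] ->
  D `<=` open.
Proof.
move=> -> S DS; exists [set S]; last by rewrite bigcup_set1.
by move=> _ ->; exact: finI_from1.
Qed.

Lemma subbase_nbhs_le (X : topologicalType) (D : set_system X) (x : X)
    (F : set_system X) :
  @open X = [set \bigcup_(A in E) A | E in subset^~ (finI_from D id)] ->
  Filter F -> (forall S, D S -> S x -> F S) -> nbhs x `<=` F.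
Proof.
move=> openE FF DF A; rewrite nbhsE; case=> O [oO Ox] OA; apply: filterS OA _.
move: oO; rewrite openE => -[E EfinI OE]; rewrite -OE in Ox *.
case: Ox => S ES Sx; apply: filterS (fun y Sy => ex_intro2 _ _ S ES Sy) _.
have [D' D'D SE] := EfinI S ES; rewrite -SE in Sx *.
apply: filter_bigI => S' D'S'; apply: DF; last exact: Sx.
exact/set_mem/D'D.
Qed.

Lemma dense_eq_continuous (X Y : topologicalType) (f g : X -> Y) (D : set X) :
  hausdorff_space Y -> continuous f -> continuous g -> dense D ->
  (forall x, D x -> f x = g x) -> f =1 g.
Proof.
move=> hY cf cg dD fg x; apply: hY => A B /(cf x) fA /(cg x) gB.
have : nbhs x (f @^-1` A `&` g @^-1` B) by exact: filterI.
rewrite nbhsE; case=> O [oO Ox] sO.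
have [y [/sO [Afy Bgy] Dy]] := dD O (ex_intro _ x Ox) oO.
by exists (f y); split; rewrite // fg.
Qed.

Lemma dense_closed_setT (X : topologicalType) (A D : set X) :
  closed A -> dense D -> D `<=` A -> A = setT.
Proof.
move=> clA dD DA; apply/seteqP; split => // x _; apply: contrapT => NAx.
have [y [NAy Dy]] := dD (~` A) (ex_intro _ x NAx) (closed_openC clA).
exact/NAy/DA.
Qed.

Lemma compact_hausdorff_homeomorphic (X Y : topologicalType) (f : X -> Y) :
  compact [set: X] -> hausdorff_space Y -> continuous f -> injective f ->
  (forall y, exists x, f x = y) -> homeomorphic X Y.
Proof.
move=> cX hY cf finj fsurj.
pose g y := projT1 (cid (fsurj y)).
have gK : cancel g f := fun y => projT2 (cid (fsurj y)).
have fK : cancel f g by move=> x; apply: finj; rewrite gK.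
exists f, g; split => //; apply/continuous_closedP => A clA.
have -> : g @^-1` A = f @` A.
  apply/seteqP; split => [y Agy|_ [x Ax <-]]; last by rewrite /= fK.
  by exists (g y); rewrite ?gK.
apply: compact_closed hY _; apply: continuous_compact.
  exact: continuous_subspaceT.
exact: subclosed_compact clA cX _.
Qed.

Lemma homeomorphic_sym (X Y : topologicalType) :
  homeomorphic X Y -> homeomorphic Y X.
Proof. by move=> [f [g [cf cg fK gK]]]; exists g, f. Qed.

Lemma compact_bounded_real (X : topologicalType) (R : realType) (f : X -> R) :
  compact [set: X] -> continuous f -> exists r, forall x, `|f x| <= r.
Proof.
move=> cX cf.
have := continuous_compact (continuous_subspaceT cf) cX.
move=> /compact_bounded [r [_ fr]].
by exists (r + 1) => x; apply: (fr (r + 1)); [rewrite ltrDl|exists x].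
Qed.

Lemma compact_hausdorff_separated (R : realType) (T : topologicalType)
    (x y : T) :
  compact [set: T] -> hausdorff_space T -> x != y ->
  exists f : T -> R, continuous f /\ f x != f y.
Proof.
move=> cT hT /eqP xy; have aT := hausdorff_accessible hT.
have crT := @normal_completely_regular R T (compact_normal hT cT) aT.
have /(@uniform_separatorP _ R) [f [cf _ f0 f1]] :=
  crT x [set y] (accessible_closed_set1 aT (x := y)) xy.
exists f; split => //.
have -> : f x = 0 by apply: f0; exists x.
have -> : f y = 1 by apply: f1; exists y.
by rewrite eq_sym oner_neq0.
Qed.

Section Quasipoints.
Variable M : topologicalType.
Implicit Types (B : QP M) (U V W : set M).

Lemma qp_eq B1 B2 : qp_set B1 = qp_set B2 -> B1 = B2.
Proof.
case: B1 B2 => F1 qF1 [F2 qF2] /= F12; subst F2.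
by congr MkQP; exact: Prop_irrelevance.
Qed.

Lemma qp_open B U : qp_set B U -> open U.
Proof. by case: (qp_ok B) => -[+ _ _ _ _] _; apply. Qed.

Lemma qp_set0 B : ~ qp_set B set0.
Proof. by case: (qp_ok B) => -[_ _ + _ _]. Qed.

Lemma qp_setS B U V : qp_set B U -> open V -> U `<=` V -> qp_set B V.
Proof. by case: (qp_ok B) => -[_ _ _ + _] _; apply. Qed.

Lemma qp_setI B U V : qp_set B U -> qp_set B V -> qp_set B (U `&` V).
Proof. by case: (qp_ok B) => -[_ _ _ _ +] _; apply. Qed.

Lemma qp_setT B : qp_set B setT.
Proof.
by case: (qp_ok B) => -[_ [U BU] _ _ _] _; apply: qp_setS BU openT _.
Qed.

Lemma qp_setI_neq0 B U V : qp_set B U -> qp_set B V -> U `&` V !=set0.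
Proof.
move=> BU BV; apply/set0P/eqP => UV0; apply: (@qp_set0 B).
by rewrite -UV0; exact: qp_setI.
Qed.

Lemma qp_set_neq0 B U : qp_set B U -> U !=set0.
Proof. by move=> BU; have := qp_setI_neq0 BU BU; rewrite setIid. Qed.

Definition open_trace (F : set_system M) : set (set M) :=
  [set U | open U /\ F U].

Lemma open_trace_dual_ideal (F : set_system M) :
  ProperFilter F -> open_dual_ideal (open_trace F).
Proof.
move=> PF; split.
- by move=> U [].
- by exists setT; split; [exact: openT|exact: filterT].
- by move=> [_]; exact: filter_not_empty.
- by move=> U V [_ FU] oV UV; split => //; exact: filterS FU.
- by move=> U V [oU FU] [oV FV]; split; [exact: openI|exact: filterI].
Qed.

Lemma open_dual_ideal_bigcup (Fs : set (set (set M))) :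
  Fs !=set0 -> (forall F, Fs F -> open_dual_ideal F) ->
  total_on Fs subset -> open_dual_ideal (\bigcup_(F in Fs) F).
Proof.
move=> [F0 FsF0] odiFs tot; have [_ [U F0U] _ _ _] := odiFs F0 FsF0; split.
- by move=> V [F FsF FV]; case: (odiFs F FsF) => + _ _ _ _; apply.
- by exists U, F0.
- by move=> [F FsF F0']; case: (odiFs F FsF) => _ _ + _ _; apply.
- move=> V W [F FsF FV] oW VW; exists F => //.
  by case: (odiFs F FsF) => _ _ _ + _; apply; [exact: FV| |].
- move=> V W [F FsF FV] [G FsG GW].
  have [FG|GF] := tot F G FsF FsG.
  + exists G => //; case: (odiFs G FsG) => _ _ _ _; apply => //; exact: FG.
  + exists F => //; case: (odiFs F FsF) => _ _ _ _; apply => //; exact: GF.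
Qed.

Lemma quasipoint_above (F : set_system M) :
  ProperFilter F -> exists B : QP M, open_trace F `<=` qp_set B.
Proof.
move=> PF; have odiF := open_trace_dual_ideal PF.
(* [set0] is admitted so that the empty chain has an upper bound. *)
pose P G := G = set0 \/ open_dual_ideal G /\ open_trace F `<=` G.
have [G [PG Gmax]] : exists G, P G /\ forall G', G `<` G' -> ~ P G'.
  apply: Zorn_bigcup => Fs FsP tot.
  have [Fs0|/existsNP [G0 /not_implyP [FsG0 G0n0]]] :=
    pselect (forall G, Fs G -> G = set0).
    by left; apply/seteqP; split => // U [G /Fs0 ->].
  have [/G0n0//|[odiG0 FG0]] := FsP G0 FsG0.
  right; split; last by move=> U FU; exists G0 => //; exact: FG0.
  have -> : \bigcup_(G in Fs) G = \bigcup_(G in Fs `&` @open_dual_ideal M) G.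
    apply/seteqP; split => U [G FsG GU]; exists G => //; last by case: FsG.
    by split => //; case: (FsP G FsG) => [G0'|[]//]; rewrite G0' in GU.
  apply: open_dual_ideal_bigcup => [|G []//|G G' [FsG _] [FsG' _]].
    by exists G0.
  exact: tot.
have [G0|[odiG FG]] := PG.
  have [_ [U FU] _ _ _] := odiF.
  exfalso; apply: (Gmax (open_trace F)); last by right; split.
  by rewrite G0; split => // /(_ U FU).
have qG : quasipoint G.
  split => // G' odiG' GG'; apply: contrapT => G'G.
  apply: (Gmax G'); last by right; split => //; exact: subset_trans GG'.
  by split => // G'sG; apply/G'G/seteqP.
by exists (MkQP qG).
Qed.

Lemma qp_set_meet B V :
  open V -> (forall U, qp_set B U -> U `&` V !=set0) -> qp_set B V.
Proof.
move=> oV meetV; pose F := filter_from (qp_set B) (fun U => U `&` V).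
have PF : ProperFilter F.
  apply: filter_from_proper => [|U /meetV //].
  apply: filter_from_filter; first by exists setT; exact: qp_setT.
  move=> U U' BU BU'; exists (U `&` U'); first exact: qp_setI.
  by move=> x [[Ux U'x] Vx].
have BF : qp_set B `<=` open_trace F.
  by move=> U BU; split; [exact: qp_open BU|exists U => // x []].
have [_ /(_ _ (open_trace_dual_ideal PF) BF) <-] := qp_ok B.
by split => //; exists setT; [exact: qp_setT|move=> x []].
Qed.

Lemma qp_set_interiorC B U : open U -> ~ qp_set B U -> qp_set B (~` U)°.
Proof.
move=> oU BNU; have [W BW WU0] : exists2 W, qp_set B W & W `&` U = set0.
  apply: contrapT => noW; apply/BNU/qp_set_meet => // W BW.
  by apply/set0P/eqP => WU0; apply: noW; exists W.
have oW := qp_open BW; apply: qp_setS BW (@open_interior _ _) _.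
rewrite -open_subsetE // => x Wx Ux.
by have : (W `&` U) x by []; rewrite WU0.
Qed.

Lemma qp_overP B x :
  qp_over B x <-> (forall V, open V -> V x -> qp_set B V).
Proof.
split => [Bx V oV Vx|BV U BU W].
  by apply: qp_set_meet => // U /Bx; apply; exact: open_nbhs_nbhs.
rewrite nbhsE => -[V [oV Vx] VW].
have [y [Uy Vy]] := qp_setI_neq0 BU (BV V oV Vx).
by exists y; split => //; exact: VW.
Qed.

Lemma qp_point x O :
  open O -> closure O x -> exists B : QP M, qp_set B O /\ qp_over B x.
Proof.
move=> oO clOx; have [B FB] := quasipoint_above (within_nbhs_proper clOx).
exists B; split; first by apply: FB; split => //; exact: withinT.
apply/qp_overP => V oV Vx; apply: FB; split => //.
by apply: (@cvg_within _ (nbhs x)); exact: open_nbhs_nbhs.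
Qed.

Lemma qp_exists_over x : exists B : QP M, qp_over B x.
Proof.
by have [B [_ Bx]] := qp_point openT (subset_closure (I : setT x)); exists B.
Qed.

Definition qp_at x : QP M := projT1 (cid (qp_exists_over x)).

Lemma qp_at_over x : qp_over (qp_at x) x.
Proof. exact: projT2 (cid (qp_exists_over x)). Qed.

Definition qp_containing U : set (QP M) := [set B | qp_set B U].

Lemma qp_containing_open U : open U -> open (qp_containing U).
Proof.
by move=> oU; apply: (@subbase_open _ (@qp_basic M) erefl); exists U.
Qed.

Lemma qp_nbhsE B : nbhs B = filter_from (qp_set B) qp_containing.
Proof.
have FB : Filter (filter_from (qp_set B) qp_containing).
  apply: filter_from_filter; first by exists setT; exact: qp_setT.
  move=> U V BU BV; exists (U `&` V); first exact: qp_setI.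
  move=> B' B'UV; split; apply: qp_setS B'UV _ _.
  - exact: qp_open BU.
  - by move=> ? [].
  - exact: qp_open BV.
  - by move=> ? [].
apply/seteqP; split.
  apply: (@subbase_nbhs_le _ (@qp_basic M) _ _ erefl) => _ [U [oU ->]] BU.
  by exists U.
move=> A [U BU UA]; apply: filterS UA _; apply: open_nbhs_nbhs.
by split => //; exact/qp_containing_open/(qp_open BU).
Qed.

Lemma qp_dense : dense (range qp_at).
Proof.
move=> A [B AB] oA; have : nbhs B A by exact: open_nbhs_nbhs.
rewrite qp_nbhsE; case=> U BU UA; have [x Ux] := qp_set_neq0 BU.
exists (qp_at x); split; last by exists x.
by apply/UA/(qp_overP _ _).1; [exact: qp_at_over|exact: qp_open BU|].
Qed.

Lemma qp_compact : compact [set: QP M].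
Proof.
rewrite compact_ultra => F UF _.
have PF : ProperFilter F by exact: ultra_proper.
pose G := filter_from [set U | open U /\ F (qp_containing U)] id.
have PG : ProperFilter G.
  apply: filter_from_proper => [|U [_ FU]]; last first.
    apply/set0P/eqP => U0; apply: (@filter_not_empty _ F PF).
    by apply: filterS FU => B; rewrite U0 => /qp_set0.
  apply: filter_from_filter.
    exists setT; split; first exact: openT.
    by apply: filterS filterT => B _; exact: qp_setT.
  move=> U V [oU FU] [oV FV]; exists (U `&` V) => //; split; first exact: openI.
  by apply: filterS (filterI FU FV) => B [BU BV]; exact: qp_setI.
have [B GB] := quasipoint_above PG; exists B; split => //.
move=> A /=; rewrite qp_nbhsE; case=> U BU UA; apply: filterS UA _.
have [//|FNU] := in_ultra_setVsetC (qp_containing U) UF.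
have oU := qp_open BU; have oW : open (~` U)° by exact: open_interior.
have FW : F (qp_containing (~` U)°).
  by apply: filterS FNU => B' /(qp_set_interiorC oU).
have BW : qp_set B (~` U)° by apply: GB; split => //; exists (~` U)°.
have [x [Ux /interior_subset NUx]] := qp_setI_neq0 BU BW.
by case: (NUx Ux).
Qed.

Definition qp_trace (G : set (QP M)) : set M :=
  \bigcup_(U in [set U | open U /\ qp_containing U `<=` G]) U.

Lemma qp_trace_open G : open (qp_trace G).
Proof. by apply: bigcup_open => U []. Qed.

Lemma qp_trace_sub G : open G -> G `<=` qp_containing (qp_trace G).
Proof.
move=> oG B GB; have : nbhs B G by exact: open_nbhs_nbhs.
rewrite qp_nbhsE; case=> U BU UG; apply: (qp_setS BU (qp_trace_open G)).
by move=> x Ux; exists U => //; split => //; exact: qp_open BU.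
Qed.

Lemma qp_trace_closure G : qp_containing (qp_trace G) `<=` closure G.
Proof.
move=> B BO A; rewrite qp_nbhsE; case=> W BW WA.
have [x [Wx [U [oU UG] Ux]]] := qp_setI_neq0 BW BO.
have oWU : open (W `&` U) by apply: openI => //; exact: qp_open BW.
have [B' [B'WU _]] := qp_point oWU (subset_closure (conj Wx Ux)).
exists B'; split.
- by apply: UG; apply: qp_setS B'WU oU _ => ? [].
- by apply: WA; apply: qp_setS B'WU (qp_open BW) _ => ? [].
Qed.

Lemma continuous_comp_qp_at (Y : topologicalType) (F : QP M -> Y) :
  regular_space Y -> continuous F ->
  (forall B1 B2 x, qp_over B1 x -> qp_over B2 x -> F B1 = F B2) ->
  continuous (F \o qp_at).
Proof.
move=> regY cF Ffibre y W /= FyW; have [V FyV VW] := regY _ _ FyW.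
pose G := F @^-1` (~` closure V).
have oG : open G.
  by apply: open_comp => [B _|]; [exact: cF|exact/closed_openC/closed_closure].
(* Otherwise a quasipoint over y containing the trace of G is adherent to G,
   although F maps it into the neighbourhood V. *)
have Ny : ~ closure (qp_trace G) y.
  move=> /(qp_point (qp_trace_open G)) [B [BO By]].
  have FB : F B = F (qp_at y) by exact: Ffibre _ _ y By (@qp_at_over y).
  have FBV : nbhs B (F @^-1` V) by apply: cF; rewrite FB.
  have [B' [GB' VB']] := qp_trace_closure BO FBV.
  exact/GB'/subset_closure.
have : nbhs y (~` qp_trace G)°.
  by apply: open_nbhs_nbhs; split; [exact: open_interior|rewrite interiorC].
apply: filterS => z Oz; apply: VW; apply: contrapT => /(qp_trace_sub oG) zO.
have zNO : qp_set (qp_at z) (~` qp_trace G)°.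
  by apply: (qp_overP _ _).1 (@qp_at_over z) _ (@open_interior _ _) Oz.
have [p [/interior_subset NOp Op]] := qp_setI_neq0 zNO zO.
exact: NOp Op.
Qed.

End Quasipoints.

Section StoneCech.
Variables (M K : topologicalType) (e : M -> K).
Hypothesis sc : stone_cech e.
Implicit Types (B : QP M) (k : K).

Let Kc : compact [set: K]. Proof. by case: sc. Qed.
Let KH : hausdorff_space K. Proof. by case: sc. Qed.
Let ec : continuous e. Proof. by case: sc => _ _ []. Qed.
Let ed : dense (range e). Proof. by case: sc. Qed.

Lemma qp_lim_ex B : exists k, forall U, qp_set B U -> closure (e @` U) k.
Proof.
pose F := filter_from (qp_set B) (image^~ e).
have PF : ProperFilter F.
  apply: filter_from_proper => [|U /qp_set_neq0 [x Ux]]; last first.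
    by exists (e x), x.
  apply: filter_from_filter; first by exists setT; exact: qp_setT.
  move=> U V BU BV; exists (U `&` V); first exact: qp_setI.
  by move=> _ [x [Ux Vx] <-]; split; exists x.
have [k [_ Fk]] := Kc PF filterT.
by exists k => U BU A kA; apply: Fk kA; exists U.
Qed.

Definition qp_lim B : K := projT1 (cid (qp_lim_ex B)).

Lemma qp_limP B U : qp_set B U -> closure (e @` U) (qp_lim B).
Proof. exact: (projT2 (cid (qp_lim_ex B)) U). Qed.

Lemma qp_lim_preimage B A :
  open A -> A (qp_lim B) -> qp_set B (e @^-1` A).
Proof.
move=> oA Ak; apply: qp_set_meet; first exact: open_comp.
move=> U /qp_limP /(_ A (open_nbhs_nbhs (conj oA Ak))) [_ [[x Ux <-] Aex]].
by exists x.
Qed.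

Lemma qp_limE B k :
  (forall A, open A -> A k -> qp_set B (e @^-1` A)) -> qp_lim B = k.
Proof.
move=> Bk; apply: KH => A1 A2; rewrite !nbhsE.
case=> U1 [oU1 U1B] U1A1 [U2 [oU2 U2k] U2A2].
have [x [U1x U2x]] := qp_setI_neq0 (qp_lim_preimage oU1 U1B) (Bk U2 oU2 U2k).
by exists (e x); split; [exact: U1A1|exact: U2A2].
Qed.

Lemma qp_lim_over B x : qp_over B x -> qp_lim B = e x.
Proof.
move=> /qp_overP Bx; apply: qp_limE => A oA Aex.
by apply: Bx => //; exact: open_comp.
Qed.

Lemma qp_lim_surj k : exists B, qp_lim B = k.
Proof.
pose F := filter_from (@open_nbhs K k) (preimage e).
have PF : ProperFilter F.
  apply: filter_from_proper => [|A [oA Ak]].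
    apply: filter_from_filter; first by exists setT; split => //; exact: openT.
    move=> A A' [oA Ak] [oA' A'k]; exists (A `&` A') => //.
    by split; [exact: openI|split].
  have [y [Ay [x _ exy]]] := ed (ex_intro _ k Ak) oA.
  by exists x; rewrite /= exy.
have [B FB] := quasipoint_above PF; exists B.
apply: qp_limE => A oA Ak; apply: FB; split; first exact: open_comp.
by exists A.
Qed.

Lemma qp_lim_continuous : continuous qp_lim.
Proof.
move=> B A /= BA; have [V BV VA] := compact_regular KH Kc filterT BA.
move: BV; rewrite nbhsE; case=> O [oO OB] OV.
rewrite qp_nbhsE; exists (e @^-1` O); first exact: qp_lim_preimage.
move=> B' /qp_limP B'O; apply/VA/(closureS _ B'O).
by move=> _ [x Oex <-]; exact: OV.
Qed.

Lemma qp_lim_inj : discrete_top M -> injective qp_lim.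
Proof.
move=> dM; suff sep B1 B2 V :
    qp_set B2 V -> ~ qp_set B1 V -> qp_lim B1 <> qp_lim B2.
  move=> B1 B2 B12; apply: qp_eq; apply/seteqP; split => V BV.
  - by apply: contrapT => NBV; exact: sep _ _ _ BV NBV (esym B12).
  - by apply: contrapT => NBV; exact: sep _ _ _ BV NBV B12.
move=> B2V NB1V; have oV := qp_open B2V.
pose U := (~` V)°; have B1U : qp_set B1 U := qp_set_interiorC oV NB1V.
pose f x : bool := `[< U x >].
have cf : continuous f by apply/continuousP => A _; exact: dM.
have [g [cg gef]] : exists g : K -> bool, continuous g /\ g \o e = f.
  case: sc => _ _ _ _; apply => //; first exact: bool_compact.
  exact: discrete_hausdorff.
have g_const b W :
    (forall x, W x -> f x = b) -> closure (e @` W) `<=` g @^-1` [set b].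
  move=> fb; rewrite closureE; apply: smallest_sub.
    exact: (continuous_closedP g).1 cg _ (discrete_closed _).
  by move=> _ [x Wx <-]; rewrite /= -[g (e x)]/((g \o e) x) gef fb.
have gB1 : g (qp_lim B1) = true.
  by apply: (g_const true U) (qp_limP B1U) => x Ux; apply/asboolP.
have gB2 : g (qp_lim B2) = false.
  apply: (g_const false V) (qp_limP B2V) => x Vx; apply/asboolPn.
  by move=> /interior_subset; apply.
by move=> B12; move: gB1; rewrite B12 gB2.
Qed.

Lemma sc_extend (Y : topologicalType) (S : set Y) (f : M -> Y) :
  locally_compact [set: Y] -> hausdorff_space Y -> compact S ->
  continuous f -> (forall x, S (f x)) ->
  exists h : K -> Y, continuous h /\ forall x, h (e x) = f x.
Proof.
move=> lcY hY cS cf Sf; pose L := one_point_compactification Y.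
have hL : hausdorff_space L by exact: one_point_compactification_hausdorff.
have cSome : continuous (Some : Y -> L).
  exact: one_point_compactification_some_continuous.
have [g [cg ge]] : exists g : K -> L, continuous g /\ g \o e = Some \o f.
  case: sc => _ _ _ _; apply => //.
    exact: one_point_compactification_compact.
  by move=> x; apply: continuous_comp (cf x) _; exact: cSome.
have clS : closed (Some @` S : set L).
  apply: compact_closed hL _; apply: continuous_compact cS.
  exact: continuous_subspaceT.
have gS : g @^-1` (Some @` S) = setT.
  apply: dense_closed_setT ed _ => [|_ [x _ <-]].
    exact: (continuous_closedP _).1 cg _ clS.
  by rewrite /= -[g (e x)]/((g \o e) x) ge; exists (f x).
have gSk k : (Some @` S) (g k).
  by have : (g @^-1` (Some @` S)) k by rewrite gS.
pose h k := s2val (cid2 (gSk k)).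
have hg k : Some (h k) = g k := s2valP' (cid2 (gSk k)).
exists h; split => [k W /= hkW|x]; last first.
  by apply: Some_inj; rewrite hg -[g (e x)]/((g \o e) x) ge.
have gW : nbhs k (g @^-1` (Some @` W)).
  by apply: cg; rewrite -hg; exact: one_point_compactification_some_nbhs.
by apply: filterS gW => k1 [y Wy]; rewrite -hg => -[yk]; rewrite /= -yk.
Qed.

Lemma sc_extend_bounded (R : realType) (f : M -> R) (r : R) :
  continuous f -> (forall x, `|f x| <= r) ->
  exists h : K -> R, continuous h /\ forall x, h (e x) = f x.
Proof.
move=> cf fr; apply: (@sc_extend _ `[- r, r]) => //.
- exact: locally_compactR.
- exact: segment_compact.
- by move=> x; rewrite /= in_itv /= -ler_norml.
Qed.

End StoneCech.

Section ComplexContinuity.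
Variable R : realType.
Local Notation C := (R[i])^o.
Local Open Scope complex_scope.

Lemma normc_ge_Im (z : R[i]) : (`|complex.Im z|)%:C <= `|z|.
Proof.
rewrite normc_def lecR -sqrtr_sqr; apply: ler_wsqrtr.
by rewrite lerDr sqr_ge0.
Qed.

Lemma contractive_complex_real_continuous (g : C -> R) :
  (forall z w, (`|g z - g w|)%:C <= `|z - w|) -> continuous g.
Proof.
move=> gz z; apply/(@cvgrPdist_lt _ _ _ (nbhs z) (nbhs_filter z)) => eps eps0.
have /cvgrPdist_lt /(_ eps%:C) : (fun w : C => w) @ z --> z by exact: cvg_id.
rewrite ltcR => /(_ eps0); apply: filterS => w zw.
by rewrite -ltcR; exact: le_lt_trans (gz z w) zw.
Qed.

Lemma Re_continuous : continuous (fun z : C => complex.Re z).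
Proof.
apply: contractive_complex_real_continuous => z w.
rewrite (_ : _ - _ = complex.Re (z - w)) ?normc_ge_Re //.
by case: z w => ? ? [].
Qed.

Lemma Im_continuous : continuous (fun z : C => complex.Im z).
Proof.
apply: contractive_complex_real_continuous => z w.
rewrite (_ : _ - _ = complex.Im (z - w)) ?normc_ge_Im //.
by case: z w => ? ? [].
Qed.

Lemma real_complex_continuous : continuous (fun x : R => (x%:C : C)).
Proof.
move=> x; apply/(@cvgrPdist_lt _ _ _ (nbhs x) (nbhs_filter x)) => eps.
rewrite ltcE /= => /andP [/eqP eps_real eps0].
have /cvgrPdist_lt /(_ _ eps0) : (fun y : R => y) @ x --> x by exact: cvg_id.
apply: filterS => y xy; rewrite -rmorphB /= normc_def /= expr0n addr0 sqrtr_sqr.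
by rewrite ltcE /= eps_real eqxx.
Qed.

Lemma conjC_continuous : continuous (fun z : C => Num.conj (z : R[i])).
Proof.
move=> z; apply/(@cvgrPdist_lt _ _ _ (nbhs z) (nbhs_filter z)) => eps eps0.
have /cvgrPdist_lt /(_ _ eps0) : (fun w : C => w) @ z --> z by exact: cvg_id.
by apply: filterS => w; rewrite -rmorphB norm_conjC.
Qed.

Lemma continuous_complex (T : topologicalType) (f g : T -> R) :
  continuous f -> continuous g ->
  continuous (fun t => (f t)%:C + 'i * (g t)%:C : C).
Proof.
move=> cf cg t.
have cfC : {for t, continuous (fun t => (f t)%:C : C)}.
  exact: continuous_comp (cf t) (@real_complex_continuous _).
have cgC : {for t, continuous (fun t => 'i * (g t)%:C : C)}.
  have := @continuousM _ _ (fun=> ('i : C)) (fun t => (g t)%:C : C) t.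
  move=> /(_ (cvg_cst _)).
  by apply; exact: continuous_comp (cg t) (@real_complex_continuous _).
exact: (@continuousD _ _ _ (fun t => (f t)%:C : C) _ t cfC cgC).
Qed.

End ComplexContinuity.

Section Characters.
Variable R : realType.
Local Notation C := (R[i])^o.

Definition character_of (A X : Type) (val : A -> X -> C) (chi : A -> C) :=
  [/\ forall a b c, (forall x, val c x = val a x + val b x) ->
        chi c = chi a + chi b,
      forall (z : C) a c, (forall x, val c x = z * val a x) ->
        chi c = z * chi a,
      forall a b c, (forall x, val c x = val a x * val b x) ->
        chi c = chi a * chi b
    & exists a, chi a != 0].

Lemma character_of_comp (A X Y : Type) (val : A -> X -> C) (val' : A -> Y -> C)
    (p : X -> Y) (chi : A -> C) :
  (forall a x, val a x = val' a (p x)) ->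
  character_of val chi -> character_of val' chi.
Proof.
move=> valE [chiD chiZ chiM chi_neq0]; split => // [a b c|z a c|a b c] vc.
- by apply: chiD => x; rewrite !valE.
- by apply: chiZ => x; rewrite !valE.
- by apply: chiM => x; rewrite !valE.
Qed.

Lemma eval_character (A X : Type) (val : A -> X -> C) (x : X) :
  (exists a, val a x != 0) -> character_of val (val^~ x).
Proof. by move=> ax; split => // *. Qed.

Section CompactSpace.
Variables (K : topologicalType) (A : Type) (val : A -> K -> C).
Variable lift : forall h : K -> C, continuous h -> A.
Hypothesis Kc : compact [set: K].
Hypothesis val_continuous : forall a, continuous (val a).
Hypothesis val_lift : forall h (ch : continuous h) k, val (lift ch) k = h k.
Variable chi : A -> C.
Hypothesis chi_char : character_of val chi.

Let one := lift (@cst_continuous K C 1).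

Lemma character_lift_one : chi one = 1.
Proof.
have [_ _ chiM [a chia]] := chi_char.
have chi1 : chi a = chi a * chi one by apply: chiM => k; rewrite val_lift mulr1.
by apply: (mulfI chia); rewrite mulr1 -chi1.
Qed.

Definition zero_set a := [set k | val a k = 0].

Lemma zero_set_closed a : closed (zero_set a).
Proof.
have cl0 : closed [set 0 : C].
  by apply/accessible_closed_set1/hausdorff_accessible; exact: norm_hausdorff.
exact: (continuous_closedP (val a)).1 (@val_continuous a) _ cl0.
Qed.

Lemma character_ker_zero_set_neq0 a : chi a = 0 -> zero_set a !=set0.
Proof.
move=> chia; apply: contrapT => noZ; have [_ _ chiM _] := chi_char.
have va_neq0 k : val a k != 0 by apply/eqP => vak; apply: noZ; exists k.
have cinv : continuous (fun k => (val a k)^-1).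
  by move=> k; apply: continuousV (va_neq0 k) _; exact: val_continuous.
have : chi one = chi a * chi (lift cinv).
  by apply: chiM => k; rewrite !val_lift mulfV.
by rewrite character_lift_one chia mul0r; apply/eqP; exact: oner_neq0.
Qed.

Lemma character_ker_zero_setI a b : chi a = 0 -> chi b = 0 ->
  exists2 c, chi c = 0 & zero_set c `<=` zero_set a `&` zero_set b.
Proof.
move=> chia chib; have [chiD _ chiM _] := chi_char.
have cconj d : continuous (fun k => Num.conj (val d k)).
  move=> k; apply: continuous_comp; first exact: val_continuous.
  exact: conjC_continuous.
have cnorm2 d : continuous (fun k => val d k * Num.conj (val d k)).
  by move=> k; exact: (continuousM (@val_continuous d k) (cconj d k)).
have chi_norm2 d : chi d = 0 -> chi (lift (cnorm2 d)) = 0.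
  move=> chid; rewrite (chiM d (lift (cconj d))) ?chid ?mul0r // => k.
  by rewrite !val_lift.
have csum : continuous
    (fun k => val (lift (cnorm2 a)) k + val (lift (cnorm2 b)) k).
  by move=> k; exact: (continuousD (@val_continuous _ k) (@val_continuous _ k)).
exists (lift csum).
  by rewrite (chiD _ _ _ (val_lift csum)) !chi_norm2 ?addr0.
move=> k; rewrite /zero_set /= !val_lift => /eqP.
rewrite paddr_eq0 ?mul_conjC_ge0 // !mul_conjC_eq0.
by move=> /andP [/eqP ? /eqP ?].
Qed.

Lemma character_common_zero : exists k, forall a, chi a = 0 -> val a k = 0.
Proof.
have [_ chiZ _ _] := chi_char.
pose F := filter_from [set a | chi a = 0] zero_set.
have PF : ProperFilter F.
  apply: filter_from_proper => [|a]; last exact: character_ker_zero_set_neq0.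
  apply: filter_from_filter => [|a b]; last exact: character_ker_zero_setI.
  exists (lift (@cst_continuous K C 0)).
  by rewrite /= (chiZ 0 one) ?mul0r // => k; rewrite !val_lift mul0r.
have [k [_ Fk]] := Kc PF filterT; exists k => a chia.
suff : closure (zero_set a) k by move: (@zero_set_closed a) => /closure_id <-.
by move=> W; apply: Fk; exists a.
Qed.

Lemma character_eval : exists k, forall a, chi a = val a k.
Proof.
have [chiD chiZ _ _] := chi_char; have [k kZ] := character_common_zero.
exists k => a; pose c := lift (@cst_continuous K C (- chi a)).
have chic : chi c = - chi a.
  rewrite (chiZ (- chi a) one) ?character_lift_one ?mulr1 // => k'.
  by rewrite !val_lift mulr1.
have cb : continuous (fun k => val a k - chi a).
  by move=> k'; exact: (continuousD (@val_continuous a k') (cvg_cst _)).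
have /kZ : chi (lift cb) = 0.
  by rewrite (chiD a c) ?chic ?subrr // => k'; rewrite !val_lift.
by rewrite val_lift => /eqP; rewrite subr_eq0 => /eqP.
Qed.

End CompactSpace.
End Characters.

Section SpectrumTopology.
Variables (R : realType) (M : topologicalType).

Lemma spec_eq (phi psi : Spec R M) : (forall F, phi F = psi F) -> phi = psi.
Proof.
case: phi psi => f1 ok1 [f2 ok2] /= f12; have f12E := funext f12; subst f2.
by congr MkSpec; exact: Prop_irrelevance.
Qed.

Lemma spec_hausdorff : hausdorff_space (Spec R M).
Proof.
rewrite open_hausdorff => phi psi /eqP phipsi.
have [F /eqP phipsiF] : exists F, phi F <> psi F.
  apply: contrapT => /forallNP eqF; apply/phipsi/spec_eq => F.
  exact: contrapT.
have := @norm_hausdorff _ (R[i])^o; rewrite open_hausdorff.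
move=> /(_ _ _ phipsiF) [[W1 W2] /= [W1phi W2psi] [oW1 oW2 /eqP W12]].
exists ([set chi : Spec R M | W1 (chi F)], [set chi : Spec R M | W2 (chi F)]).
  by split; apply/mem_set; [exact: set_mem W1phi|exact: set_mem W2psi].
have spec_open W : open W -> open [set chi : Spec R M | W (chi F)].
  by move=> oW; apply: (@subbase_open _ (@spec_basic R M) erefl); exists F, W.
split; [exact: spec_open|exact: spec_open|].
apply/eqP/seteqP; split => // chi [W1chi W2chi].
by have : (W1 `&` W2) (chi F) by []; rewrite W12.
Qed.

End SpectrumTopology.

Section Spectrum.
Variables (R : realType) (M K : topologicalType) (e : M -> K).
Hypothesis sc : stone_cech e.
Local Notation C := (R[i])^o.
Local Open Scope complex_scope.

Let Kc : compact [set: K]. Proof. by case: sc. Qed.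
Let KH : hausdorff_space K. Proof. by case: sc. Qed.

Lemma cpt_factor (F : Cpt R M) :
  exists h : K -> C, continuous h /\ forall B, h (qp_lim sc B) = F B.
Proof.
have cFM : continuous (F \o qp_at (M:=M)).
  apply: continuous_comp_qp_at uniform_regular (@cpt_cont _ _ F) _.
  exact: cpt_fibre.
have ext_part (g : C -> R) : continuous g ->
    exists h : K -> R, continuous h /\ forall x, h (e x) = g (F (qp_at x)).
  move=> cg; have cgF : continuous (g \o F).
    by move=> B; exact: continuous_comp (@cpt_cont _ _ F B) (cg _).
  have [r gFr] := compact_bounded_real (@qp_compact M) cgF.
  apply: (sc_extend_bounded sc (r := r)) => [x|x]; last exact: gFr.
  exact: continuous_comp (cFM x) (cg _).
have [hr [hr_cont hrE]] := ext_part _ (@Re_continuous R).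
have [hi [hi_cont hiE]] := ext_part _ (@Im_continuous R).
pose h k : C := (hr k)%:C + 'i * (hi k)%:C.
have ch : continuous h by exact: continuous_complex.
exists h; split => //.
apply: (dense_eq_continuous _ _ (@cpt_cont _ _ F) (@qp_dense M)).
- exact: norm_hausdorff.
- by move=> B; exact: continuous_comp (@qp_lim_continuous _ _ _ sc B) (ch _).
move=> _ [x _ <-]; rewrite /= (qp_lim_over sc (@qp_at_over _ x)) /h.
by rewrite hrE hiE -complexE.
Qed.

Definition cpt_ext (F : Cpt R M) : K -> C := projT1 (cid (cpt_factor F)).

Lemma cpt_ext_continuous F : continuous (cpt_ext F).
Proof. by case: (projT2 (cid (cpt_factor F))). Qed.

Lemma cpt_ext_lim F B : cpt_ext F (qp_lim sc B) = F B.
Proof. by case: (projT2 (cid (cpt_factor F))) => _; apply. Qed.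

Definition cpt_of (h : K -> C) (ch : continuous h) : Cpt R M.
Proof.
apply: (@MkCpt R M (h \o qp_lim sc)).
- by move=> B; exact: continuous_comp (@qp_lim_continuous _ _ _ sc B) (ch _).
- move=> B1 B2 x B1x B2x.
  by rewrite /= (qp_lim_over sc B1x) (qp_lim_over sc B2x).
Defined.

Lemma cpt_ext_of h (ch : continuous h) k : cpt_ext (cpt_of ch) k = h k.
Proof. by have [B <-] := qp_lim_surj sc k; rewrite cpt_ext_lim. Qed.

Lemma cpt_ext_character k : cpt_character (fun F : Cpt R M => cpt_ext F k).
Proof.
have [B <-] := qp_lim_surj sc k.
rewrite (_ : (fun F => _) = fun F : Cpt R M => F B); last first.
  by apply: funext => F; rewrite cpt_ext_lim.
apply: (@eval_character R _ _ (@cpt_fun R M) B).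
by exists (cpt_of (@cst_continuous K C 1)); rewrite /= oner_neq0.
Qed.

Definition sc_to_spec (k : K) : Spec R M := MkSpec (cpt_ext_character k).

Lemma sc_to_spec_continuous : continuous sc_to_spec.
Proof.
move=> k; apply: (@subbase_nbhs_le _ (@spec_basic R M) _ _ erefl).
move=> _ [F [W [oW ->]]] /= WFk.
exact: (@cpt_ext_continuous F k _ (open_nbhs_nbhs (conj oW WFk))).
Qed.

Lemma sc_to_spec_inj : injective sc_to_spec.
Proof.
move=> k1 k2 k12; apply: contrapT => /eqP k1k2.
have [f [cf /eqP fk12]] := compact_hausdorff_separated R Kc KH k1k2.
apply: fk12; apply: complexI.
have cfC : continuous (fun k => (f k)%:C : C).
  by move=> k; exact: continuous_comp (cf k) (@real_complex_continuous R _).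
have := congr1 (fun phi : Spec R M => phi (cpt_of cfC)) k12.
by rewrite /= !cpt_ext_of.
Qed.

Lemma sc_to_spec_surj phi : exists k, sc_to_spec k = phi.
Proof.
have chi_ext : character_of cpt_ext phi.
  apply: (character_of_comp (p := qp_lim sc)) (spec_ok phi) => F B.
  by rewrite cpt_ext_lim.
have [k phiE] := character_eval Kc cpt_ext_continuous cpt_ext_of chi_ext.
by exists k; apply: spec_eq => F; rewrite phiE.
Qed.

End Spectrum.

Theorem corollary2p46 (R : realType) (M : topologicalType)
  (hM : hausdorff_space M) (crM : completely_regular_space M) :
  (forall (K : topologicalType) (e : M -> K),
      stone_cech e -> homeomorphic K (Spec R M))
  /\
  (discrete_top M ->
     forall (K : topologicalType) (e : M -> K),
       stone_cech e -> homeomorphic K (QP M)).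
Proof.
split => [K e sc|dM K e sc].
- have [Kc _ _ _ _] := sc.
  apply: (@compact_hausdorff_homeomorphic _ _ (sc_to_spec R sc) Kc).
  + exact: spec_hausdorff.
  + exact: sc_to_spec_continuous.
  + exact: sc_to_spec_inj.
  + exact: sc_to_spec_surj.
- have [_ KH _ _ _] := sc.
  apply/homeomorphic_sym/(@compact_hausdorff_homeomorphic _ _ (qp_lim sc)).
  + exact: qp_compact.
  + exact: KH.
  + exact: qp_lim_continuous.
  + exact: qp_lim_inj.
  + exact: qp_lim_surj.
Qed.
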